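(* Let $K$ be an algebraically closed field of characteristic zero and $e_1\in 3+2\mathbb{N}$. Let $S\subset K^3$ be the surface $x_3^2+(x_1^{e_1}-x_2^2)x_1=0$, $S'\subset K^3$ the surface $\alpha^{2e_1}-4\beta\gamma=0$, $\sigma(\alpha,\beta,\gamma)=(-\alpha,\gamma,\beta)$ on $S'$ with $\sigma^*(f)=f\circ\sigma$, and identify $\mathcal{O}(S)$ with a subring of $\mathcal{O}(S')$ via the dominant morphism $F(\alpha,\beta,\gamma)=(\alpha^2,\beta+\gamma,\alpha(\beta-\gamma))$. Then for every $K$-derivation $D$ of $\mathcal{O}(S)$ there exists a unique derivation $D'$ of $\mathcal{O}(S')$ commuting with $\sigma^*$ and coinciding with $D$ on $\mathcal{O}(S)$. Moreover, if $D$ is weighted homogeneous on $S$ then $D'$ is weighted homogeneous on $S'$.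
   Context: $S$ is graded by the weights $2,e_1,e_1+1$ on $x_1,x_2,x_3$, and $S'$ by the weights $1,e_1,e_1$ on $\alpha,\beta,\gamma$. A derivation is weighted homogeneous (of degree $r$) if it sends homogeneous elements of degree $m$ to homogeneous elements of degree $m+r$. *)

From HB Require Import structures.
From mathcomp Require Import all_boot all_order all_algebra.
From mathcomp Require Import ring.
From mathcomp Require Import mpoly.
Set Implicit Arguments. Unset Strict Implicit. Unset Printing Implicit Defensive.
Import Order.TTheory GRing.Theory Num.Theory.
Local Open Scope ring_scope.

Definition i0 : 'I_3 := @Ordinal 3 0 isT.
Definition i1 : 'I_3 := @Ordinal 3 1 isT.
Definition i2 : 'I_3 := @Ordinal 3 2 isT.

Definition mkpt (K : Type) (a b c : K) : 'I_3 -> K :=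
  fun i => match val i with 0 => a | 1 => b | _ => c end.

Section Surfaces.
Variable K : fieldType.

Definition Pt (P : pred ('I_3 -> K)) := {v : 'I_3 -> K | P v}.

(* Regular functions on the surface: restrictions of polynomials.
   (K algebraically closed and the defining polynomials are irreducible,
   so this is the coordinate ring O(S).) *)
Definition regular (P : pred ('I_3 -> K)) (f : Pt P -> K) : Prop :=
  exists p : {mpoly K[3]}, forall x : Pt P, f x = p.@[val x].

(* A derivation of O(S): an operator defined on functions on the points,
   mapping regular functions to regular functions, additive and Leibniz on
   regular functions (only its values on regular functions matter). *)
Definition is_derivation (P : pred ('I_3 -> K)) (D : (Pt P -> K) -> (Pt P -> K)) : Prop :=
  [/\ forall f, regular f -> regular (D f),
      forall f g, regular f -> regular g ->
        forall x, D (fun y => f y + g y) x = D f x + D g x &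
      forall f g, regular f -> regular g ->
        forall x, D (fun y => f y * g y) x = f x * D g x + D f x * g x].

Definition is_Kderivation (P : pred ('I_3 -> K)) (D : (Pt P -> K) -> (Pt P -> K)) : Prop :=
  is_derivation D /\
  forall (c : K) f, regular f -> forall x, D (fun y => c * f y) x = c * D f x.

Definition wdeg (w : 'I_3 -> nat) (m : 'X_{1..3}) : nat := (\sum_(i < 3) w i * m i)%N.

Definition whomog_poly (w : 'I_3 -> nat) (d : int) (p : {mpoly K[3]}) : Prop :=
  forall m, m \in msupp p -> (wdeg w m)%:Z = d.

Definition whomog (P : pred ('I_3 -> K)) (w : 'I_3 -> nat) (d : int) (f : Pt P -> K) : Prop :=
  exists p : {mpoly K[3]}, whomog_poly w d p /\ forall x : Pt P, f x = p.@[val x].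

Definition whomog_der (P : pred ('I_3 -> K)) (w : 'I_3 -> nat) (r : int)
  (D : (Pt P -> K) -> (Pt P -> K)) : Prop :=
  forall (m : nat) f, whomog w m%:Z f -> whomog w (m%:Z + r) (D f).

Variable e1 : nat.

Definition onS : pred ('I_3 -> K) :=
  fun v => v i2 ^+ 2 + (v i0 ^+ e1 - v i1 ^+ 2) * v i0 == 0.
Definition onS' : pred ('I_3 -> K) :=
  fun v => v i0 ^+ (2 * e1) - 4 * v i1 * v i2 == 0.

Definition wS : 'I_3 -> nat := fun i => match val i with 0 => 2%N | 1 => e1 | _ => e1.+1 end.
Definition wS' : 'I_3 -> nat := fun i => match val i with 0 => 1%N | _ => e1 end.

Definition Fmap (v : 'I_3 -> K) : 'I_3 -> K :=
  mkpt (v i0 ^+ 2) (v i1 + v i2) (v i0 * (v i1 - v i2)).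
Definition sigmap (v : 'I_3 -> K) : 'I_3 -> K := mkpt (- v i0) (v i2) (v i1).

Lemma Fmap_onS v : onS' v -> onS (Fmap v).
Proof.
rewrite /onS /onS' /Fmap /mkpt /= => /eqP H.
apply/eqP.
have -> : (v i0 * (v i1 - v i2)) ^+ 2 + ((v i0 ^+ 2) ^+ e1 - (v i1 + v i2) ^+ 2) * v i0 ^+ 2
   = v i0 ^+ 2 * (v i0 ^+ (2 * e1) - 4 * v i1 * v i2).
  rewrite -exprM mulnC; ring.
by rewrite H mulr0.
Qed.

Lemma sigmap_onS' v : onS' v -> onS' (sigmap v).
Proof.
rewrite /onS' /sigmap /mkpt /= => H.
by rewrite exprM sqrrN -exprM -mulrA [v i2 * _]mulrC mulrA.
Qed.

Definition Fpt (x : Pt onS') : Pt onS := exist _ (Fmap (val x)) (Fmap_onS (valP x)).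
Definition sigpt (x : Pt onS') : Pt onS' := exist _ (sigmap (val x)) (sigmap_onS' (valP x)).

End Surfaces.

Definition commutes_sigma (K : fieldType) (e1 : nat)
  (D' : (Pt (@onS' K e1) -> K) -> (Pt (@onS' K e1) -> K)) : Prop :=
  forall f, regular f -> forall x, D' (f \o @sigpt K e1) x = D' f (sigpt x).

Definition extends_along_F (K : fieldType) (e1 : nat)
  (D : (Pt (@onS K e1) -> K) -> (Pt (@onS K e1) -> K))
  (D' : (Pt (@onS' K e1) -> K) -> (Pt (@onS' K e1) -> K)) : Prop :=
  forall f, regular f -> forall x, D' (f \o @Fpt K e1) x = D f (Fpt x).

(* Since F o sigma = F, the uniqueness and sigma-invariance of the lift both come from one fact:
   where alpha != 0 the differential dF is injective, so two derivations of O(S') that agree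
   with D on O(S) agree on the coordinates at every point with alpha != 0, hence everywhere, as
   {alpha = 0} contains no component of S'.  For existence, D is given by a vector field
   P = (P0, P1, P2) tangent to S, and one looks for V = (VA, VB, VC) on S' with dF(V) = P o F:
     2 alpha VA = P0 o F,   VB + VC = P1 o F,   alpha (VB - VC) + (beta - gamma) VA = P2 o F.
   Tangency of P along S is what makes P0 o F and P2 o F - (beta - gamma) VA divisible
   by alpha on S', and a density argument shows that the resulting V is tangent to S', so it
   defines a derivation of O(S').  Finally, conjugating the lift by the weighted K^* action on
   S' gives another lift of D, so by uniqueness the lift is homogeneous when D is. *)

From HB Require Import structures.
From mathcomp Require Import all_boot all_order all_algebra.
From mathcomp Require Import ring.
From mathcomp Require Import mpoly.
From Stdlib Require Import ClassicalEpsilon FunctionalExtensionality.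
Set Implicit Arguments. Unset Strict Implicit. Unset Printing Implicit Defensive.
Import GRing.Theory.
Local Open Scope ring_scope.

(** * Polynomial functions and directional derivatives *)

Lemma ord3_cases (i : 'I_3) : i = i0 \/ i = i1 \/ i = i2.
Proof.
by case: i => [[|[|[|k]]] Hi] //; [left|right; left|right; right]; apply: val_inj.
Qed.

Lemma mkpt_eta (T : Type) (v : 'I_3 -> T) : v = mkpt (v i0) (v i1) (v i2).
Proof.
by apply: functional_extensionality => i; case: (ord3_cases i) => [->|[->|->]].
Qed.

Lemma mkpt_i0 (T : Type) (a b c : T) : mkpt a b c i0 = a. Proof. by []. Qed.
Lemma mkpt_i1 (T : Type) (a b c : T) : mkpt a b c i1 = b. Proof. by []. Qed.
Lemma mkpt_i2 (T : Type) (a b c : T) : mkpt a b c i2 = c. Proof. by []. Qed.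
Definition mkptE := (mkpt_i0, mkpt_i1, mkpt_i2).

Section PolynomialFunctions.
Variable K : fieldType.
Implicit Types (p q h : {mpoly K[3]}) (v d : 'I_3 -> K).

Lemma mpoly3_ind (Q : {mpoly K[3]} -> Prop) :
  (forall c, Q c%:MP) -> (forall i, Q 'X_i) ->
  (forall p q, Q p -> Q q -> Q (p + q)) ->
  (forall p q, Q p -> Q q -> Q (p * q)) -> forall p, Q p.
Proof.
move=> QC QX QD QM.
have QXm m : Q 'X_[m].
  have QXn i k : Q ('X_i ^+ k).
    by elim: k => [|k IH]; [rewrite expr0 -mpolyC1|rewrite exprS; apply: (QM)].
  rewrite mpolyXE_id !big_ord_recr big_ord0 /= -mpolyC1.
  by do 3 apply: (QM) => //.
elim/mpolyind => [|c m p _ _ Qp]; first by rewrite -mpolyC0.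
by apply: QD => //; rewrite -mul_mpolyC; apply: QM.
Qed.

Lemma mevalXn p k v : (p ^+ k).@[v] = p.@[v] ^+ k.
Proof. exact: rmorphXn. Qed.

Lemma mderivXU (i j : 'I_3) : mderiv j ('X_i : {mpoly K[3]}) = (i == j)%:R%:MP.
Proof.
rewrite mderivX mnm1E; case: eqP => [->|_]; last by rewrite scale0r mpolyC0.
have -> : (U_(j) - U_(j) = 0)%MM by apply/mnmP => k; rewrite mnmBE mnm0E subnn.
by rewrite mpolyX0 scale1r.
Qed.

Definition dirder p v d : K :=
  (mderiv i0 p).@[v] * d i0 + (mderiv i1 p).@[v] * d i1 + (mderiv i2 p).@[v] * d i2.

Lemma dirderC c v d : dirder c%:MP v d = 0.
Proof. by rewrite /dirder !mderivC !meval0; ring. Qed.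

Lemma dirderXU i v d : dirder 'X_i v d = d i.
Proof.
rewrite /dirder !mderivXU !mevalC.
by case: (ord3_cases i) => [->|[->|->]]; rewrite /= ?mul1r ?mul0r ?addr0 ?add0r.
Qed.

Lemma dirderD p q v d : dirder (p + q) v d = dirder p v d + dirder q v d.
Proof. by rewrite /dirder !mderivD !mevalD; ring. Qed.

Lemma dirderN p v d : dirder (- p) v d = - dirder p v d.
Proof. by rewrite /dirder !mderivN !mevalN; ring. Qed.

Lemma dirderB p q v d : dirder (p - q) v d = dirder p v d - dirder q v d.
Proof. by rewrite /dirder !mderivB !mevalB; ring. Qed.

Lemma dirderM p q v d : dirder (p * q) v d = p.@[v] * dirder q v d + dirder p v d * q.@[v].
Proof. by rewrite /dirder !mderivM !mevalD !mevalM; ring. Qed.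

Lemma dirderXn p k v d :
  dirder (p ^+ k.+1) v d = k.+1%:R * p.@[v] ^+ k * dirder p v d.
Proof.
elim: k => [|k IH]; first by rewrite expr1 expr0 mul1r mul1r.
rewrite exprS dirderM IH mevalXn /= -(addn1 k.+1) natrD exprS; ring.
Qed.

Lemma point_derivation_dirder v (delta : {mpoly K[3]} -> K) :
  (forall c, delta c%:MP = 0) -> (forall p q, delta (p + q) = delta p + delta q) ->
  (forall p q, delta (p * q) = p.@[v] * delta q + delta p * q.@[v]) ->
  forall p, delta p = dirder p v (fun i => delta 'X_i).
Proof.
move=> dC dD dM; elim/mpoly3_ind => [c|i|p q Hp Hq|p q Hp Hq].
- by rewrite dC dirderC.
- by rewrite dirderXU.
- by rewrite dD dirderD Hp Hq.
- by rewrite dM dirderM Hp Hq.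
Qed.

Lemma deriv_mpoly_curve h (c : 'I_3 -> {poly K}) :
  exists H : {poly K}, (forall t, H.[t] = h.@[fun i => (c i).[t]]) /\
    forall t, H^`().[t] = dirder h (fun i => (c i).[t]) (fun i => (c i)^`().[t]).
Proof.
elim/mpoly3_ind: h => [a|i|p q [P [HP1 HP2]] [Q [HQ1 HQ2]]|p q [P [HP1 HP2]] [Q [HQ1 HQ2]]].
- exists (a%:P); split => t; first by rewrite hornerC mevalC.
  by rewrite derivC horner0 dirderC.
- by exists (c i); split => t; rewrite ?mevalXU ?dirderXU.
- exists (P + Q); split => t; first by rewrite hornerD HP1 HQ1 mevalD.
  by rewrite derivD hornerD HP2 HQ2 dirderD.
- exists (P * Q); split => t; first by rewrite hornerM HP1 HQ1 mevalM.
  by rewrite derivM hornerD !hornerM HP1 HQ1 HP2 HQ2 dirderM addrC.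
Qed.

Definition polyfun (f : ('I_3 -> K) -> K) := exists p : {mpoly K[3]}, forall v, f v = p.@[v].

Lemma polyfun_meval p : polyfun (fun v => p.@[v]).
Proof. by exists p. Qed.

Lemma polyfun_cst c : polyfun (fun _ => c).
Proof. by exists c%:MP => v; rewrite mevalC. Qed.

Lemma polyfun_coord i : polyfun (fun v => v i).
Proof. by exists 'X_i => v; rewrite mevalXU. Qed.

Lemma polyfunD f g : polyfun f -> polyfun g -> polyfun (fun v => f v + g v).
Proof. by move=> [p Hp] [q Hq]; exists (p + q) => v; rewrite mevalD Hp Hq. Qed.

Lemma polyfunM f g : polyfun f -> polyfun g -> polyfun (fun v => f v * g v).
Proof. by move=> [p Hp] [q Hq]; exists (p * q) => v; rewrite mevalM Hp Hq. Qed.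

Lemma polyfunN f : polyfun f -> polyfun (fun v => - f v).
Proof. by move=> [p Hp]; exists (- p) => v; rewrite mevalN Hp. Qed.

Lemma polyfunX f k : polyfun f -> polyfun (fun v => f v ^+ k).
Proof. by move=> [p Hp]; exists (p ^+ k) => v; rewrite mevalXn Hp. Qed.

Lemma polyfun_ind (Q : (('I_3 -> K) -> K) -> Prop) :
  (forall c, Q (fun _ => c)) -> (forall i, Q (fun v => v i)) ->
  (forall f g, polyfun f -> polyfun g -> Q f -> Q g -> Q (fun v => f v + g v)) ->
  (forall f g, polyfun f -> polyfun g -> Q f -> Q g -> Q (fun v => f v * g v)) ->
  forall f, polyfun f -> Q f.
Proof.
move=> QC QX QD QM f [p Hp].
rewrite (functional_extensionality _ _ Hp) {f Hp}.
elim/mpoly3_ind: p => [c|i|p q Hp Hq|p q Hp Hq].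
- by rewrite (functional_extensionality _ _ (fun v => mevalC v c)).
- by rewrite (functional_extensionality _ _ (fun v => mevalXU v i)).
- rewrite (functional_extensionality _ _ (fun v => mevalD v p q)).
  by apply: QD => //; apply: polyfun_meval.
- rewrite (functional_extensionality _ _ (fun v => mevalM v p q)).
  by apply: QM => //; apply: polyfun_meval.
Qed.

Lemma polyfun_comp f (phi : ('I_3 -> K) -> 'I_3 -> K) :
  (forall i, polyfun (fun v => phi v i)) -> polyfun f -> polyfun (fun v => f (phi v)).
Proof.
move=> hphi; elim/polyfun_ind => // [c|f1 g1 _ _|f1 g1 _ _].
- exact: polyfun_cst.
- exact: polyfunD.
- exact: polyfunM.
Qed.

Lemma polyfun_mkpt (a b c : ('I_3 -> K) -> K) :
  polyfun a -> polyfun b -> polyfun c -> forall i, polyfun (fun v => mkpt (a v) (b v) (c v) i).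
Proof. by move=> ha hb hc i; case: (ord3_cases i) => [->|[->|->]]. Qed.

Definition upolyfun (f : K -> K) := exists q : {poly K}, forall t, f t = q.[t].

Lemma upolyfun_curve f (c : K -> 'I_3 -> K) :
  (forall i, upolyfun (fun t => c t i)) -> polyfun f -> upolyfun (fun t => f (c t)).
Proof.
move=> hc; elim/polyfun_ind => // [a|f1 g1 _ _ [p Hp] [q Hq]|f1 g1 _ _ [p Hp] [q Hq]].
- by exists a%:P => t; rewrite hornerC.
- by exists (p + q) => t; rewrite hornerD Hp Hq.
- by exists (p * q) => t; rewrite hornerM Hp Hq.
Qed.

Lemma upolyfun_cst a : upolyfun (fun _ => a).
Proof. by exists a%:P => t; rewrite hornerC. Qed.

Lemma upolyfun_id : upolyfun id.
Proof. by exists 'X => t; rewrite hornerX. Qed.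

Lemma upolyfun_monomial k a : upolyfun (fun t => t ^+ k * a).
Proof. by exists (a *: 'X^k) => t; rewrite hornerZ hornerXn mulrC. Qed.

Lemma upolyfun_mkpt (a b c : K -> K) :
  upolyfun a -> upolyfun b -> upolyfun c -> forall i, upolyfun (fun t => mkpt (a t) (b t) (c t) i).
Proof. by move=> ha hb hc i; case: (ord3_cases i) => [->|[->|->]]. Qed.

End PolynomialFunctions.

Ltac polyfun_tac := repeat first
  [ assumption | apply: polyfun_cst | apply: polyfun_coord | apply: polyfunD
  | apply: polyfunN | apply: polyfunM | apply: polyfunX ].

(** * Density of {alpha != 0} in S' *)

Section CharacteristicZero.
Variable K : fieldType.
Hypothesis charK : [pchar K] =i pred0.

Lemma char0_natf_eq0 n : (n%:R == 0 :> K) = (n == 0)%N.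
Proof. exact: (pcharf0P K).1 charK n. Qed.

Lemma char0_natf_inj : injective (fun n : nat => n%:R : K).
Proof.
move=> i j /= eq_ij; apply/eqP; wlog le_ij : i j eq_ij / (i <= j)%N.
  by move=> H; case/orP: (leq_total i j) => /H; [apply|rewrite eq_sym; apply].
by rewrite eqn_leq le_ij /= -subn_eq0 -char0_natf_eq0 natrB // eq_ij subrr.
Qed.

Lemma poly_eq0_nonzero_roots (q : {poly K}) : (forall t, t != 0 -> q.[t] = 0) -> q = 0.
Proof.
move=> q0; apply/eqP/negPn/negP => /max_poly_roots max_roots.
pose rs := [seq i.+1%:R : K | i <- iota 0 (size q)].
have roots_q : all (root q) rs.
  by apply/allP => _ /mapP [i _ ->]; apply/rootP/q0; rewrite char0_natf_eq0.
have uniq_rs : uniq rs by rewrite map_inj_uniq ?iota_uniq // => i j /char0_natf_inj [].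
by have := max_roots _ roots_q uniq_rs; rewrite size_map size_iota ltnn.
Qed.

Lemma upolyfun_eq0 (f : K -> K) :
  upolyfun f -> (forall t, t != 0 -> f t = 0) -> forall t, f t = 0.
Proof.
move=> [q Hq] f0 t; rewrite Hq (@poly_eq0_nonzero_roots q) ?horner0 // => s /f0.
by rewrite Hq.
Qed.

End CharacteristicZero.

Section CoordinateSplitting.
Variable K : fieldType.
Implicit Types (v : 'I_3 -> K) (f : ('I_3 -> K) -> K).

Definition setc (i : 'I_3) v : 'I_3 -> K := fun j => if j == i then 0 else v j.

Lemma setc0E v : setc i0 v = mkpt 0 (v i1) (v i2).
Proof. by apply: functional_extensionality => j; case: (ord3_cases j) => [->|[->|->]]. Qed.

Lemma setc1E v : setc i1 v = mkpt (v i0) 0 (v i2).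
Proof. by apply: functional_extensionality => j; case: (ord3_cases j) => [->|[->|->]]. Qed.

Lemma setc2E v : setc i2 v = mkpt (v i0) (v i1) 0.
Proof. by apply: functional_extensionality => j; case: (ord3_cases j) => [->|[->|->]]. Qed.

Lemma polyfun_setc i f : polyfun f -> polyfun (fun v => f (setc i v)).
Proof.
apply: polyfun_comp => j; rewrite /setc.
by case: eqP => _; [apply: polyfun_cst|apply: polyfun_coord].
Qed.

Lemma polyfun_split_coord i f :
  polyfun f -> exists g, polyfun g /\ forall v, f v = f (setc i v) + v i * g v.
Proof.
move: f; apply: polyfun_ind
  => [c|j|f g hf hg [f1 [hf1 Ef]] [g1 [hg1 Eg]]|f g hf hg [f1 [hf1 Ef]] [g1 [hg1 Eg]]].
- by exists (fun _ => 0); split=> [|v]; rewrite ?mulr0 ?addr0 //; apply: polyfun_cst.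
- exists (fun _ => (j == i)%:R); split=> [|v]; first exact: polyfun_cst.
  by rewrite /setc; case: eqP => [->|]; rewrite ?add0r ?mulr1 ?mulr0 ?addr0.
- exists (fun v => f1 v + g1 v); split=> [|v]; first exact: polyfunD.
  by rewrite {1}Ef {1}Eg; ring.
- exists (fun v => f1 v * g (setc i v) + f (setc i v) * g1 v + v i * (f1 v * g1 v)).
  split=> [|v]; last by rewrite {1}Ef {1}Eg; ring.
  have hfs := polyfun_setc i hf; have hgs := polyfun_setc i hg.
  by repeat apply: polyfunD; repeat apply: polyfunM => //; apply: polyfun_coord.
Qed.

End CoordinateSplitting.

Section SurfaceS'.
Variables (K : fieldType) (e : nat).
Hypothesis charK : [pchar K] =i pred0.
Hypothesis e_gt0 : (0 < e)%N.
Implicit Types (a b c t : K) (v : 'I_3 -> K) (u : ('I_3 -> K) -> K).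

Lemma expr2e_pred a : a ^+ (2 * e) = a * a ^+ (2 * e).-1.
Proof. by rewrite -exprS prednK // muln_gt0 e_gt0. Qed.

Lemma onS'_mkpt a b c : onS' e (mkpt a b c) = (a ^+ (2 * e) == 4 * b * c).
Proof. by rewrite /onS' subr_eq0. Qed.

Lemma onS'E v : onS' e v -> v i0 ^+ (2 * e) = 4 * v i1 * v i2.
Proof. by rewrite {1}(mkpt_eta v) onS'_mkpt => /eqP. Qed.

Lemma onS'_a0 b c : onS' e (mkpt 0 b c) = (b * c == 0).
Proof.
rewrite onS'_mkpt expr0n muln_eq0 (gtn_eqF e_gt0) /= eq_sym -mulrA mulf_eq0.
by rewrite (char0_natf_eq0 charK).
Qed.

Lemma onS'_a0_bc v : onS' e v -> v i0 = 0 -> v i1 * v i2 = 0.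
Proof. by rewrite {1}(mkpt_eta v) => + a0; rewrite a0 onS'_a0 => /eqP. Qed.

Lemma polyfun_eq0_on_curve u (b c : K -> K) :
  polyfun u -> (forall v, onS' e v -> v i0 != 0 -> u v = 0) ->
  upolyfun b -> upolyfun c -> (forall t, t ^+ (2 * e) = 4 * b t * c t) ->
  u (mkpt 0 (b 0) (c 0)) = 0.
Proof.
move=> hu u0 hb hc bc.
apply: (upolyfun_eq0 charK (f := fun t => u (mkpt t (b t) (c t)))) => [|t t0].
  exact/upolyfun_curve/hu/upolyfun_mkpt/hc/hb/upolyfun_id.
by apply: u0; rewrite ?onS'_mkpt ?bc.
Qed.

Lemma polyfun_eq0_onS' u :
  polyfun u -> (forall v, onS' e v -> v i0 != 0 -> u v = 0) ->
  forall v, onS' e v -> u v = 0.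
Proof.
move=> hu u0 v hv; have [a0|] := eqVneq (v i0) 0; last exact: u0.
have bc0 := onS'_a0_bc hv a0.
have n2 : (2 : K) != 0 by rewrite (char0_natf_eq0 charK).
have n4 : (4 : K) != 0 by rewrite (char0_natf_eq0 charK).
have te0 : (0 : K) ^+ e = 0 by rewrite expr0n (gtn_eqF e_gt0).
have t2e0 : (0 : K) ^+ (2 * e) = 0 by rewrite expr0n muln_eq0 (gtn_eqF e_gt0).
rewrite (mkpt_eta v) a0.
have [b0|bn0] := eqVneq (v i1) 0; have [c0|cn0] := eqVneq (v i2) 0.
- have := polyfun_eq0_on_curve hu u0 (upolyfun_monomial e 2^-1) (upolyfun_monomial e 2^-1).
  by rewrite te0 mul0r b0 c0; apply=> t; rewrite mulnC exprM; field; rewrite n2.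
- have := polyfun_eq0_on_curve hu u0 (upolyfun_monomial (2 * e) (4 * v i2)^-1)
    (upolyfun_cst (v i2)).
  by rewrite t2e0 mul0r b0; apply=> t; field; rewrite n4 cn0.
- have := polyfun_eq0_on_curve hu u0 (upolyfun_cst (v i1))
    (upolyfun_monomial (2 * e) (4 * v i1)^-1).
  by rewrite t2e0 mul0r c0; apply=> t; field; rewrite n4 bn0.
- by move/eqP: bc0; rewrite mulf_eq0 (negbTE bn0) (negbTE cn0).
Qed.

Lemma polyfun_dvd_bc r :
  polyfun r -> (forall b c, b * c = 0 -> r (mkpt 0 b c) = 0) ->
  exists s, polyfun s /\ forall v, r (setc i0 v) = v i1 * v i2 * s v.
Proof.
move=> hr r0.
have [g [hg Eg]] := polyfun_split_coord i1 (polyfun_setc i0 hr).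
have rb v : r (setc i0 v) = v i1 * g (setc i0 v).
  by have := Eg (setc i0 v); rewrite !setc0E setc1E !mkptE (r0 0) ?mul0r // add0r.
have [s [hs Es]] := polyfun_split_coord i2 (polyfun_setc i0 hg).
have g_b0 t : g (mkpt 0 t 0) = 0.
  apply: (upolyfun_eq0 charK (f := fun t => g (mkpt 0 t 0))) => [|{}t tn0].
    apply/upolyfun_curve/hg/upolyfun_mkpt;
      [exact: upolyfun_cst|exact: upolyfun_id|exact: upolyfun_cst].
  have := rb (mkpt 0 t 0); rewrite setc0E !mkptE (r0 t 0) ?mulr0 //.
  by move/esym/eqP; rewrite mulf_eq0 (negbTE tn0) => /eqP.
exists s; split=> // v.
by rewrite rb Es setc2E setc0E !mkptE g_b0 add0r mulrA.
Qed.

Lemma polyfun_dvd_a w :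
  polyfun w -> (forall v, onS' e v -> v i0 = 0 -> w v = 0) ->
  exists q, polyfun q /\ forall v, onS' e v -> w v = v i0 * q v.
Proof.
move=> hw w0.
have [g [hg Eg]] := polyfun_split_coord i0 hw.
have [s [hs Es]] : exists s, polyfun s /\ forall v, w (setc i0 v) = v i1 * v i2 * s v.
  by apply: polyfun_dvd_bc => // b c bc; apply: w0; rewrite ?onS'_a0 ?bc.
have n4 : (4 : K) != 0 by rewrite (char0_natf_eq0 charK).
exists (fun v => g v + v i0 ^+ (2 * e).-1 / 4 * s v); split.
  by apply: polyfunD => //; apply: polyfunM => //; apply: polyfunM;
    [apply: polyfunX; apply: polyfun_coord|apply: polyfun_cst].
move=> v hv; rewrite Eg Es -[v i1 * v i2](mulKf n4) mulrA -(onS'E hv).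
by rewrite expr2e_pred; field.
Qed.

End SurfaceS'.

(** * Lifting tangent vector fields along F *)

Section Maps.
Variable K : fieldType.
Implicit Types (v : 'I_3 -> K).

Definition Fpoly : 'I_3 -> {mpoly K[3]} :=
  mkpt ('X_i0 ^+ 2) ('X_i1 + 'X_i2) ('X_i0 * ('X_i1 - 'X_i2)).

Lemma meval_Fpoly i v : (Fpoly i).@[v] = Fmap v i.
Proof.
by case: (ord3_cases i) => [->|[->|->]]; rewrite /Fpoly /Fmap !mkptE;
  rewrite !(mevalD, mevalN, mevalM, mevalXn, mevalXU).
Qed.

Lemma polyfun_Fmap i : polyfun (fun v => Fmap v i).
Proof. by exists (Fpoly i) => v; rewrite meval_Fpoly. Qed.

Lemma dirder_Fpoly v d :
  [/\ dirder (Fpoly i0) v d = 2 * v i0 * d i0, dirder (Fpoly i1) v d = d i1 + d i2 &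
      dirder (Fpoly i2) v d = v i0 * (d i1 - d i2) + (v i1 - v i2) * d i0].
Proof.
rewrite /Fpoly !mkptE !(dirderD, dirderN, dirderM, dirderXn, dirderXU).
by rewrite !(mevalD, mevalN, mevalXU) expr1; split; ring.
Qed.

Lemma polyfun_sigmap i : polyfun (fun v => sigmap v i).
Proof. by apply: polyfun_mkpt; polyfun_tac. Qed.

End Maps.

Section TangentFields.
Variable K : fieldType.
Implicit Types (p h : {mpoly K[3]}) (v d : 'I_3 -> K).

Lemma dirder_lin p v (a b : K) (d1 d2 : 'I_3 -> K) :
  dirder p v (fun i => a * d1 i + b * d2 i) = a * dirder p v d1 + b * dirder p v d2.
Proof. by rewrite /dirder; ring. Qed.

Definition vmeval (V : 'I_3 -> {mpoly K[3]}) v : 'I_3 -> K := fun i => (V i).@[v].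

Lemma polyfun_dirder h (V : 'I_3 -> {mpoly K[3]}) : polyfun (fun v => dirder h v (vmeval V v)).
Proof.
exists (mderiv i0 h * V i0 + mderiv i1 h * V i1 + mderiv i2 h * V i2) => v.
by rewrite /dirder /vmeval !mevalD !mevalM.
Qed.

Variable e : nat.

Definition eqS : {mpoly K[3]} := 'X_i2 ^+ 2 + ('X_i0 ^+ e - 'X_i1 ^+ 2) * 'X_i0.
Definition eqS' : {mpoly K[3]} := 'X_i0 ^+ (2 * e) - 4 * 'X_i1 * 'X_i2.

Lemma onS_eqS v : onS e v = (eqS.@[v] == 0).
Proof. by rewrite /onS /eqS !(mevalD, mevalN, mevalM, mevalXn, mevalXU). Qed.

Hypothesis e_gt0 : (0 < e)%N.

Lemma dirder_eqS v d : dirder eqS v d =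
  (e.+1%:R * v i0 ^+ e - v i1 ^+ 2) * d i0 - 2 * v i0 * v i1 * d i1 + 2 * v i2 * d i2.
Proof.
rewrite /eqS; case: e e_gt0 => // m _.
rewrite !(dirderD, dirderN, dirderM, dirderXn, dirderXU).
by rewrite !(mevalD, mevalN, mevalXn, mevalXU) -(addn1 m.+1) natrD !exprS; ring.
Qed.

Lemma dirder_eqS' v d : dirder eqS' v d =
  (2 * e)%:R * v i0 ^+ (2 * e).-1 * d i0 - 4 * v i2 * d i1 - 4 * v i1 * d i2.
Proof.
have e2_gt0 : (0 < 2 * e)%N by rewrite muln_gt0 e_gt0.
rewrite /eqS' -mpolyC_nat -(prednK e2_gt0).
rewrite !(dirderD, dirderN, dirderM, dirderXn, dirderXU, dirderC) prednK //.
rewrite !(mevalM, mevalC, mevalXU); ring.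
Qed.

End TangentFields.

Section TangentFieldsS'.
Variables (K : fieldType) (e : nat).
Hypothesis charK : [pchar K] =i pred0.
Hypothesis e_gt0 : (0 < e)%N.
Implicit Types (h : {mpoly K[3]}) (v : 'I_3 -> K).

Lemma dirder_curve_eq0 (P : pred ('I_3 -> K)) (h : {mpoly K[3]}) (c : 'I_3 -> {poly K}) :
  (forall v, P v -> h.@[v] = 0) -> (forall t, P (fun i => (c i).[t])) ->
  forall t, dirder h (fun i => (c i).[t]) (fun i => (c i)^`().[t]) = 0.
Proof.
move=> h0 cP t; have [H [H_val H_deriv]] := deriv_mpoly_curve h c.
have H0 : H = 0 by apply: (poly_eq0_nonzero_roots charK) => s _; rewrite H_val h0.
by rewrite -H_deriv H0 deriv0 horner0.
Qed.

Let slope (v : 'I_3 -> K) : K := (2 * e)%:R * v i0 ^+ (2 * e).-1.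

Lemma slope_neq0 v : v i0 != 0 -> slope v != 0.
Proof.
move=> a0; apply: mulf_neq0; last exact: expf_neq0.
by rewrite (char0_natf_eq0 charK) muln_eq0 (gtn_eqF e_gt0).
Qed.

Lemma onS'_bc_neq0 v : onS' e v -> v i0 != 0 -> (v i1 != 0) && (v i2 != 0).
Proof.
move=> /onS'E Ev a0; rewrite -negb_or -mulf_eq0; apply/eqP => bc0; move/eqP: Ev.
by rewrite -mulrA bc0 mulr0 expf_eq0 (negbTE a0) andbF.
Qed.

(* The direction is the velocity at [t = v i0] of the curve t |-> (t, b, t^(2e)/4b) in S'. *)
Lemma dirder_eq0_curve_c h v : (forall w, onS' e w -> h.@[w] = 0) ->
  onS' e v -> v i1 != 0 -> dirder h v (mkpt 1 0 (slope v / (4 * v i1))) = 0.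
Proof.
move=> h0 hv bn0; have n4 : (4 : K) != 0 by rewrite (char0_natf_eq0 charK).
pose c := mkpt 'X (v i1)%:P ((4 * v i1)^-1 *: 'X^(2 * e)) : 'I_3 -> {poly K}.
have c_S' t : onS' e (fun i => (c i).[t]).
  rewrite /onS' /c !mkptE !(hornerX, hornerC, hornerZ, hornerXn).
  by apply/eqP; field; rewrite bn0 n4.
have := dirder_curve_eq0 h0 c_S' (v i0); congr (dirder _ _ _ = 0).
  rewrite [RHS]mkpt_eta; apply: functional_extensionality => i.
  case: (ord3_cases i) => [->|[->|->]]; rewrite /c !mkptE ?(hornerX, hornerC, hornerZ, hornerXn) //.
  by rewrite (onS'E hv); field; rewrite bn0 n4.
apply: functional_extensionality => i.
case: (ord3_cases i) => [->|[->|->]]; rewrite /c !mkptE;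
  rewrite ?(derivX, derivC, derivZ, derivXn, hornerC, hornerZ, hornerMn, hornerXn) //.
by rewrite -[v i0 ^+ _ *+ _]mulr_natl -/(slope v) mulrC.
Qed.

Lemma dirder_eq0_curve_b h v : (forall w, onS' e w -> h.@[w] = 0) ->
  onS' e v -> v i2 != 0 -> dirder h v (mkpt 1 (slope v / (4 * v i2)) 0) = 0.
Proof.
move=> h0 hv cn0; have n4 : (4 : K) != 0 by rewrite (char0_natf_eq0 charK).
pose c := mkpt 'X ((4 * v i2)^-1 *: 'X^(2 * e)) (v i2)%:P : 'I_3 -> {poly K}.
have c_S' t : onS' e (fun i => (c i).[t]).
  rewrite /onS' /c !mkptE !(hornerX, hornerC, hornerZ, hornerXn).
  by apply/eqP; field; rewrite cn0 n4.
have := dirder_curve_eq0 h0 c_S' (v i0); congr (dirder _ _ _ = 0).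
  rewrite [RHS]mkpt_eta; apply: functional_extensionality => i.
  case: (ord3_cases i) => [->|[->|->]]; rewrite /c !mkptE ?(hornerX, hornerC, hornerZ, hornerXn) //.
  by rewrite (onS'E hv); field; rewrite cn0 n4.
apply: functional_extensionality => i.
case: (ord3_cases i) => [->|[->|->]]; rewrite /c !mkptE;
  rewrite ?(derivX, derivC, derivZ, derivXn, hornerC, hornerZ, hornerMn, hornerXn) //.
by rewrite -[v i0 ^+ _ *+ _]mulr_natl -/(slope v) mulrC.
Qed.

Definition tangentS' (V : 'I_3 -> {mpoly K[3]}) :=
  forall v, onS' e v -> dirder (eqS' K e) v (vmeval V v) = 0.

Lemma tangentS'_dirder_eq0 V : tangentS' V ->
  forall h, (forall v, onS' e v -> h.@[v] = 0) ->
  forall v, onS' e v -> dirder h v (vmeval V v) = 0.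
Proof.
move=> tV h h0; apply: polyfun_eq0_onS' => // [|v hv a0]; first exact: polyfun_dirder.
have n4 : (4 : K) != 0 by rewrite (char0_natf_eq0 charK).
have /andP [bn0 cn0] := onS'_bc_neq0 hv a0.
have kn0 := slope_neq0 a0.
have := tV v hv; rewrite dirder_eqS' // -/(slope v) => tVv.
have kVA : slope v * (V i0).@[v] = 4 * v i2 * (V i1).@[v] + 4 * v i1 * (V i2).@[v].
  by apply/eqP; rewrite -subr_eq0 -tVv /vmeval; apply/eqP; ring.
(* Where alpha != 0, the two curve velocities span the tangent plane of S'. *)
pose a := 4 * v i1 * (V i2).@[v] / slope v; pose b := 4 * v i2 * (V i1).@[v] / slope v.
have -> : vmeval V v = fun i =>
    a * mkpt 1 0 (slope v / (4 * v i1)) i + b * mkpt 1 (slope v / (4 * v i2)) 0 i.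
  rewrite [LHS]mkpt_eta; apply: functional_extensionality => i.
  case: (ord3_cases i) => [->|[->|->]]; rewrite /vmeval !mkptE /a /b; move: kn0 kVA;
    set k := slope v; clearbody k => kn0 kVA.
  (* [field] fails on the symbolic power hidden in the body of [k]. *)
  - by rewrite -[(V i0).@[v]](mulKf kn0) kVA; field.
  - by field; rewrite kn0 cn0 n4.
  - by field; rewrite kn0 bn0 n4.
by rewrite dirder_lin dirder_eq0_curve_c ?dirder_eq0_curve_b // !mulr0 addr0.
Qed.

End TangentFieldsS'.

Section LiftTangentField.
Variables (K : fieldType) (e : nat).
Hypothesis charK : [pchar K] =i pred0.
Hypothesis e_gt0 : (0 < e)%N.
Variables P0 P1 P2 : ('I_3 -> K) -> K.
Hypotheses (hP0 : polyfun P0) (hP1 : polyfun P1) (hP2 : polyfun P2).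
Hypothesis P_tangent :
  forall y, onS e y -> dirder (eqS K e) y (mkpt (P0 y) (P1 y) (P2 y)) = 0.
Implicit Types (v : 'I_3 -> K).

Let Q0 v := P0 (Fmap v).
Let Q1 v := P1 (Fmap v).
Let Q2 v := P2 (Fmap v).
Let hQ0 : polyfun Q0 := polyfun_comp (@polyfun_Fmap K) hP0.
Let hQ1 : polyfun Q1 := polyfun_comp (@polyfun_Fmap K) hP1.
Let hQ2 : polyfun Q2 := polyfun_comp (@polyfun_Fmap K) hP2.
Let n2 : (2 : K) != 0. Proof. by rewrite (char0_natf_eq0 charK). Qed.

Lemma P_tangentE y : onS e y ->
  (e.+1%:R * y i0 ^+ e - y i1 ^+ 2) * P0 y - 2 * y i0 * y i1 * P1 y + 2 * y i2 * P2 y = 0.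
Proof. by move/P_tangent; rewrite dirder_eqS // !mkptE. Qed.

Lemma P0_axis t : P0 (mkpt 0 t 0) = 0.
Proof.
apply: (upolyfun_eq0 charK (f := fun t => P0 (mkpt 0 t 0))) => [|{}t tn0].
  apply/upolyfun_curve/hP0/upolyfun_mkpt;
    [exact: upolyfun_cst|exact: upolyfun_id|exact: upolyfun_cst].
have onS_t : onS e (mkpt 0 t 0).
  by rewrite /onS !mkptE expr0n mulr0 addr0.
move: (P_tangentE onS_t); rewrite !mkptE expr0n (gtn_eqF e_gt0) !(mulr0, mul0r) subr0 addr0 sub0r.
by move/eqP; rewrite mulNr oppr_eq0 mulf_eq0 expf_eq0 (negbTE tn0) => /eqP.
Qed.

Lemma Q0_dvd_a : exists q, polyfun q /\ forall v, onS' e v -> Q0 v = v i0 * q v.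
Proof.
apply: (polyfun_dvd_a charK e_gt0 hQ0) => v _ a0.
by rewrite /Q0 /Fmap a0 expr0n mul0r P0_axis.
Qed.

Section Quotients.
Variable q0 : ('I_3 -> K) -> K.
Hypotheses (hq0 : polyfun q0) (Eq0 : forall v, onS' e v -> Q0 v = v i0 * q0 v).

Let VA v := q0 v / 2.

(* The tangency of [P] at [F v], divided by [2 alpha]. *)
Let Z v := VA v * (e.+1%:R * v i0 ^+ (2 * e) - (v i1 + v i2) ^+ 2)
   - v i0 * (v i1 + v i2) * Q1 v + (v i1 - v i2) * Q2 v.

Lemma lift_Z_eq0 v : onS' e v -> Z v = 0.
Proof.
apply: (polyfun_eq0_onS' charK e_gt0) => [|{}v hv a0]; first by rewrite /Z /VA; polyfun_tac.
have := P_tangentE (Fmap_onS hv); rewrite /Fmap !mkptE -/(Fmap v) -/(Q0 v) -/(Q1 v) -/(Q2 v).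
rewrite Eq0 // -exprM => T.
have : 2 * v i0 * Z v = 0 by rewrite -T /Z /VA; field.
by move/eqP; rewrite !mulf_eq0 (negbTE n2) (negbTE a0) => /eqP.
Qed.

Let w v := Q2 v - (v i1 - v i2) * VA v.

Lemma lift_w_a0 v : onS' e v -> v i0 = 0 -> v i1 - v i2 != 0 -> w v = 0.
Proof.
move=> hv a0 dn0; have bc0 := onS'_a0_bc charK e_gt0 hv a0.
have := lift_Z_eq0 hv; rewrite /Z a0 => Z0.
have : (v i1 - v i2) * w v = 0.
  rewrite -Z0 /w (_ : (v i1 + v i2) ^+ 2 = (v i1 - v i2) ^+ 2 + 4 * (v i1 * v i2)); last by ring.
  by rewrite bc0 (expr2e_pred e_gt0) mul0r; ring.
by move/eqP; rewrite mulf_eq0 (negbTE dn0) => /eqP.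
Qed.

Lemma w_dvd_a : exists q, polyfun q /\ forall v, onS' e v -> w v = v i0 * q v.
Proof.
apply: (polyfun_dvd_a charK e_gt0); first by rewrite /w /VA; polyfun_tac.
move=> v hv a0; have [dn0|] := eqVneq (v i1 - v i2) 0; last exact: lift_w_a0.
have bc0 := onS'_a0_bc charK e_gt0 hv a0.
move/eqP: dn0; rewrite subr_eq0 => /eqP bc; move: bc0; rewrite bc => /eqP.
rewrite mulf_eq0 orbb => /eqP c0; rewrite (mkpt_eta v) a0 bc c0.
apply: (upolyfun_eq0 charK (f := fun t => w (mkpt 0 t 0))) => [|t tn0].
  apply: upolyfun_curve; last by rewrite /w /VA; polyfun_tac.
  by apply: upolyfun_mkpt; [exact: upolyfun_cst|exact: upolyfun_id|exact: upolyfun_cst].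
by apply: lift_w_a0; rewrite ?onS'_a0 ?mulr0 // !mkptE subr0.
Qed.

Variable q2 : ('I_3 -> K) -> K.
Hypotheses (hq2 : polyfun q2) (Eq2 : forall v, onS' e v -> w v = v i0 * q2 v).

Let VB v := (Q1 v + q2 v) / 2.
Let VC v := (Q1 v - q2 v) / 2.

Lemma lift_tangent v : onS' e v ->
  (2 * e)%:R * v i0 ^+ (2 * e).-1 * VA v - 4 * v i2 * VB v - 4 * v i1 * VC v = 0.
Proof.
move: v; apply: (polyfun_eq0_onS' charK e_gt0) => [|v hv a0].
  by rewrite /VA /VB /VC; polyfun_tac.
apply: (mulfI a0); rewrite mulr0.
have -> : v i0 * ((2 * e)%:R * v i0 ^+ (2 * e).-1 * VA v - 4 * v i2 * VB v - 4 * v i1 * VC v)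
    = 2 * Z v + 2 * VA v * (4 * v i1 * v i2 - v i0 ^+ (2 * e))
      + 2 * (v i1 - v i2) * (v i0 * q2 v - w v).
  rewrite /Z /w /VB /VC (expr2e_pred e_gt0) -(addn1 e) natrD natrM.
  by move: (v i0 ^+ _) => x; field.
by rewrite lift_Z_eq0 // (onS'E hv) subrr Eq2 // subrr !mulr0 !addr0.
Qed.

End Quotients.

Lemma lift_tangent_field : exists V : 'I_3 -> {mpoly K[3]}, tangentS' e V /\
  forall v, onS' e v ->
    forall i, dirder (Fpoly K i) v (vmeval V v) = mkpt (Q0 v) (Q1 v) (Q2 v) i.
Proof.
have [q0 [hq0 Eq0]] := Q0_dvd_a.
have [q2 [hq2 Eq2]] := w_dvd_a hq0 Eq0.
have [vA EA] : polyfun (fun v => q0 v / 2) by polyfun_tac.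
have [vB EB] : polyfun (fun v => (Q1 v + q2 v) / 2) by polyfun_tac.
have [vC EC] : polyfun (fun v => (Q1 v - q2 v) / 2) by polyfun_tac.
exists (mkpt vA vB vC); split=> v hv.
  by rewrite dirder_eqS' // /vmeval !mkptE -EA -EB -EC (lift_tangent hq0 Eq0 hq2 Eq2).
have [F0 F1 F2] := dirder_Fpoly v (vmeval (mkpt vA vB vC) v).
move/eqP: (Eq2 v hv); rewrite subr_eq => /eqP EQ2.
move=> i; case: (ord3_cases i) => [->|[->|->]]; rewrite ?(F0, F1, F2) /vmeval !mkptE -?EA -?EB -?EC.
- by rewrite Eq0 //; field.
- by field.
- by rewrite EQ2; field.
Qed.

End LiftTangentField.

(** * Derivations of the coordinate rings *)

Section RegularFunctions.
Variables (K : fieldType) (P : pred ('I_3 -> K)).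
Implicit Types (p q : {mpoly K[3]}) (f g : Pt P -> K) (D : (Pt P -> K) -> Pt P -> K).

Definition rfun p : Pt P -> K := fun y => p.@[val y].

Lemma regular_rfun p : regular (rfun p).
Proof. by exists p. Qed.

Lemma regularE f : regular f -> exists p, f = rfun p.
Proof. by move=> [p Hp]; exists p; apply: functional_extensionality. Qed.

Lemma rfunC c : rfun c%:MP = fun _ => c.
Proof. by apply: functional_extensionality => y; rewrite /rfun mevalC. Qed.

Lemma rfunD p q : rfun (p + q) = fun y => rfun p y + rfun q y.
Proof. by apply: functional_extensionality => y; rewrite /rfun mevalD. Qed.

Lemma rfunM p q : rfun (p * q) = fun y => rfun p y * rfun q y.
Proof. by apply: functional_extensionality => y; rewrite /rfun mevalM. Qed.

(* A representative polynomial of [f], junk ([0]) when [f] is not regular. *)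
Definition rep f : {mpoly K[3]} := epsilon (inhabits 0) (fun p => forall x, f x = p.@[val x]).

Lemma rep_spec f : regular f -> f = rfun (rep f).
Proof.
move=> hf; apply: functional_extensionality.
exact: (epsilon_spec (inhabits 0) (fun p => forall x, f x = p.@[val x])).
Qed.

Lemma derivation_cst D : is_Kderivation D -> forall c x, D (fun _ => c) x = 0.
Proof.
move=> [[_ _ DM] DK] c x.
have r1 : regular (fun _ : Pt P => 1 : K) by exists 1 => y; rewrite meval1.
have D1 : D (fun _ => 1) x = 0.
  have := DM _ _ r1 r1 x; rewrite /= !mul1r mulr1 => D1D1.
  by apply: (addrI (D (fun _ => 1) x)); rewrite addr0 -D1D1.
have := DK c _ r1 x; rewrite D1 mulr0.
by rewrite (functional_extensionality _ _ (fun _ => mulr1 c)).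
Qed.

Lemma derivation_rfun D : is_derivation D -> (forall c x, D (fun _ => c) x = 0) ->
  forall p x, D (rfun p) x = dirder p (val x) (fun i => D (rfun 'X_i) x).
Proof.
move=> [_ DD DM] DC p x; apply: (point_derivation_dirder (delta := fun q => D (rfun q) x)).
- by move=> c; rewrite rfunC DC.
- by move=> q1 q2; rewrite rfunD DD //; exact: regular_rfun.
- by move=> q1 q2; rewrite rfunM DM //; exact: regular_rfun.
Qed.

Lemma derivation_dirder_eq0 D : is_derivation D -> (forall c x, D (fun _ => c) x = 0) ->
  forall p, (forall v, P v -> p.@[v] = 0) ->
  forall x, dirder p (val x) (fun i => D (rfun 'X_i) x) = 0.
Proof.
move=> dD DC p p0 x; rewrite -(derivation_rfun dD DC).
have -> : rfun p = fun _ => 0 by apply: functional_extensionality => y; apply/p0/valP.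
exact: DC.
Qed.

Lemma derivation_eq_coord D1 D2 : is_derivation D1 -> is_derivation D2 ->
  (forall c x, D1 (fun _ => c) x = 0) -> (forall c x, D2 (fun _ => c) x = 0) ->
  (forall i x, D1 (rfun 'X_i) x = D2 (rfun 'X_i) x) ->
  forall f, regular f -> forall x, D1 f x = D2 f x.
Proof.
move=> dD1 dD2 D1C D2C DX f /regularE [p ->] x.
rewrite (derivation_rfun dD1 D1C) (derivation_rfun dD2 D2C); congr dirder.
exact: functional_extensionality.
Qed.

End RegularFunctions.

Arguments regular_rfun {K P} p.

Section DerivationOfTangentField.
Variables (K : fieldType) (e : nat).
Hypothesis charK : [pchar K] =i pred0.
Hypothesis e_gt0 : (0 < e)%N.
Variable V : 'I_3 -> {mpoly K[3]}.
Hypothesis tV : tangentS' e V.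
Implicit Types (p : {mpoly K[3]}) (f : Pt (@onS' K e) -> K) (x : Pt (@onS' K e)).

Definition Dfield f x : K := dirder (rep f) (val x) (vmeval V (val x)).

Lemma Dfield_rfun p x : Dfield (rfun p) x = dirder p (val x) (vmeval V (val x)).
Proof.
apply/eqP; rewrite -subr_eq0 -dirderB; apply/eqP.
apply: (tangentS'_dirder_eq0 charK e_gt0 tV _ (valP x)) => v hv.
have := congr1 (fun f => f (exist _ v hv)) (rep_spec (regular_rfun p)).
by rewrite /rfun /= mevalB => <-; rewrite subrr.
Qed.

Lemma Dfield_derivation : is_derivation Dfield.
Proof.
split=> [f /regularE [p ->]|f g /regularE [p ->] /regularE [q ->] x|
         f g /regularE [p ->] /regularE [q ->] x].
- exists (mderiv i0 p * V i0 + mderiv i1 p * V i1 + mderiv i2 p * V i2) => x.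
  by rewrite Dfield_rfun /dirder /vmeval !mevalD !mevalM.
- by rewrite -rfunD !Dfield_rfun dirderD.
- by rewrite -rfunM !Dfield_rfun dirderM.
Qed.

Lemma Dfield_cst c x : Dfield (fun _ => c) x = 0.
Proof. by rewrite -rfunC Dfield_rfun dirderC. Qed.

End DerivationOfTangentField.

Section ExtensionAlongF.
Variables (K : fieldType) (e : nat).
Hypothesis charK : [pchar K] =i pred0.
Hypothesis e_gt0 : (0 < e)%N.
Local Notation S := (@onS K e).
Local Notation S' := (@onS' K e).
Local Notation Fpt := (@Fpt K e).
Local Notation opS := ((Pt S -> K) -> Pt S -> K).
Local Notation opS' := ((Pt S' -> K) -> Pt S' -> K).

Lemma regular_comp_Fpt (f : Pt S -> K) : regular f -> regular (f \o Fpt).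
Proof.
move=> /regularE [p ->]; have [q Hq] := polyfun_comp (@polyfun_Fmap K) (polyfun_meval p).
by exists q => y; rewrite -Hq.
Qed.

Lemma rfunXU_comp_Fpt i : rfun 'X_i \o Fpt = rfun (Fpoly K i).
Proof. by apply: functional_extensionality => y; rewrite /rfun /= mevalXU meval_Fpoly. Qed.

Lemma derivation_comp_Fpt (D' : opS') : is_derivation D' -> (forall c x, D' (fun _ => c) x = 0) ->
  forall p x, D' (rfun p \o Fpt) x = dirder p (Fmap (val x)) (fun i => D' (rfun 'X_i \o Fpt) x).
Proof.
move=> [_ DD DM] DC p x.
apply: (point_derivation_dirder (delta := fun q => D' (rfun q \o Fpt) x)) => [c|q1 q2|q1 q2].
- by rewrite rfunC DC.
- by rewrite rfunD DD //; apply: regular_comp_Fpt; apply: regular_rfun.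
- by rewrite rfunM DM //; apply: regular_comp_Fpt; apply: regular_rfun.
Qed.

Lemma dirder_Fpoly_inj v d1 d2 : v i0 != 0 ->
  (forall i, dirder (Fpoly K i) v d1 = dirder (Fpoly K i) v d2) -> d1 = d2.
Proof.
move=> a0 eqF; have n2 : (2 : K) != 0 by rewrite (char0_natf_eq0 charK).
have [F0 F1 F2] := dirder_Fpoly v d1; have [G0 G1 G2] := dirder_Fpoly v d2.
have := eqF i0; have := eqF i1; have := eqF i2; rewrite F0 F1 F2 G0 G1 G2.
move=> E2 E1 /(mulfI (mulf_neq0 n2 a0)) E0; rewrite E0 in E2.
move/addIr/(mulfI a0): E2 => E12.
have E1' : d1 i1 = d2 i1.
  apply: (mulfI n2); transitivity ((d1 i1 + d1 i2) + (d1 i1 - d1 i2)); first ring.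
  by rewrite E1 E12; ring.
rewrite (mkpt_eta d1) (mkpt_eta d2) E0 E1'; congr mkpt.
by move: E1; rewrite E1' => /addrI.
Qed.

Lemma extension_dirder_Fpoly (D : opS) (D' : opS') :
  is_derivation D' -> (forall c x, D' (fun _ => c) x = 0) -> extends_along_F D D' ->
  forall i x, dirder (Fpoly K i) (val x) (fun j => D' (rfun 'X_j) x) = D (rfun 'X_i) (Fpt x).
Proof.
move=> dD' D'C ext i x.
by rewrite -(derivation_rfun dD' D'C) -rfunXU_comp_Fpt ext //; apply: regular_rfun.
Qed.

Lemma extension_unique (D : opS) (D1 D2 : opS') :
  is_derivation D1 -> is_derivation D2 ->
  (forall c x, D1 (fun _ => c) x = 0) -> (forall c x, D2 (fun _ => c) x = 0) ->
  extends_along_F D D1 -> extends_along_F D D2 ->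
  forall f, regular f -> forall x, D1 f x = D2 f x.
Proof.
move=> dD1 dD2 D1C D2C ext1 ext2; apply: derivation_eq_coord => // i x.
have [R1 _ _] := dD1; have [R2 _ _] := dD2.
have [r1 Er1] := regularE (R1 _ (regular_rfun 'X_i)).
have [r2 Er2] := regularE (R2 _ (regular_rfun 'X_i)).
rewrite Er1 Er2; apply/eqP; rewrite -subr_eq0 /rfun -mevalB; apply/eqP.
move: (val x) (valP x); apply: (polyfun_eq0_onS' charK e_gt0 (polyfun_meval _)) => v hv a0.
pose z : Pt S' := exist _ v hv.
have d12 : (fun j => D1 (rfun 'X_j) z) = (fun j => D2 (rfun 'X_j) z).
  apply: (dirder_Fpoly_inj a0) => j.
  exact: etrans (extension_dirder_Fpoly dD1 D1C ext1 j z)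
    (esym (extension_dirder_Fpoly dD2 D2C ext2 j z)).
by have := congr1 (fun d => d i) d12; rewrite Er1 Er2 mevalB /rfun /= => ->; rewrite subrr.
Qed.

Local Notation sigpt := (@sigpt K e).

Lemma sigptK x : sigpt (sigpt x) = x.
Proof.
apply: val_inj; rewrite [RHS]mkpt_eta /= /sigmap !mkptE opprK.
by apply: functional_extensionality => i; case: (ord3_cases i) => [->|[->|->]].
Qed.

Lemma Fpt_sigpt x : Fpt (sigpt x) = Fpt x.
Proof.
by apply: val_inj; rewrite /= /Fmap /sigmap !mkptE; congr mkpt; ring.
Qed.

Lemma regular_comp_sigpt (f : Pt S' -> K) : regular f -> regular (f \o sigpt).
Proof.
move=> /regularE [p ->]; have [q Hq] := polyfun_comp (@polyfun_sigmap K) (polyfun_meval p).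
by exists q => y; rewrite -Hq.
Qed.

Lemma extension_commutes_sigma (D : opS) (D' : opS') :
  is_derivation D' -> (forall c x, D' (fun _ => c) x = 0) -> extends_along_F D D' ->
  commutes_sigma D'.
Proof.
move=> dD' D'C ext; have [DR DD DM] := dD'.
pose E f x := D' (f \o sigpt) (sigpt x).
have dE : is_derivation E.
  split=> [f hf|f g hf hg x|f g hf hg x].
  - by apply: (regular_comp_sigpt (f := D' _)); apply/DR/regular_comp_sigpt.
  - by apply: DD; apply: regular_comp_sigpt.
  - by rewrite /E DM ?sigptK //; apply: regular_comp_sigpt.
have extE : extends_along_F D E.
  move=> f hf x; rewrite /E -Fpt_sigpt -ext //.
  by congr D'; apply: functional_extensionality => y; rewrite /= Fpt_sigpt.
move=> f hf x; rewrite -{1}(sigptK x).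
exact: (extension_unique dE dD' (fun c x => D'C c _) D'C extE ext hf).
Qed.

End ExtensionAlongF.

Section LiftOfDerivations.
Variables (K : fieldType) (e : nat).
Hypothesis charK : [pchar K] =i pred0.
Hypothesis e_gt0 : (0 < e)%N.
Local Notation S := (@onS K e).
Local Notation S' := (@onS' K e).
Local Notation opS := ((Pt S -> K) -> Pt S -> K).
Local Notation opS' := ((Pt S' -> K) -> Pt S' -> K).

Lemma Dfield_extends (D : opS) V : tangentS' e V ->
  is_derivation D -> (forall c x, D (fun _ => c) x = 0) ->
  (forall i x, dirder (Fpoly K i) (val x) (vmeval V (val x)) = D (rfun 'X_i) (Fpt x)) ->
  extends_along_F D (Dfield V).
Proof.
move=> tV dD DC DV f /regularE [p ->] x.
rewrite (derivation_comp_Fpt (Dfield_derivation charK e_gt0 tV) (Dfield_cst charK e_gt0 tV)).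
rewrite (derivation_rfun dD DC); congr dirder; apply: functional_extensionality => i.
by rewrite rfunXU_comp_Fpt Dfield_rfun.
Qed.

Lemma eqS_vanishes v : S v -> (eqS K e).@[v] = 0.
Proof. by rewrite onS_eqS => /eqP. Qed.

Theorem Kderivation_lift (D : opS) : is_Kderivation D ->
  exists D' : opS', [/\ is_derivation D', forall c x, D' (fun _ => c) x = 0,
    commutes_sigma D', extends_along_F D D' &
    forall D'' : opS', is_derivation D'' -> extends_along_F D D'' ->
      forall f, regular f -> forall x, D'' f x = D' f x].
Proof.
move=> hD; have DC := derivation_cst hD; have [dD _] := hD; have [DR _ _] := dD.
pose p i := rep (D (rfun 'X_i)).
have Dp i : D (rfun 'X_i) = rfun (p i) by apply/rep_spec/DR/regular_rfun.
have tP y : S y -> dirder (eqS K e) y (mkpt (p i0).@[y] (p i1).@[y] (p i2).@[y]) = 0.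
  move=> hy; rewrite -(derivation_dirder_eq0 dD DC eqS_vanishes (exist _ y hy)).
  congr dirder; apply: functional_extensionality => i; rewrite Dp.
  by case: (ord3_cases i) => [->|[->|->]].
have [V [tV FV]] := lift_tangent_field charK e_gt0 (polyfun_meval (p i0))
  (polyfun_meval (p i1)) (polyfun_meval (p i2)) tP.
have dV := Dfield_derivation charK e_gt0 tV; have VC := Dfield_cst charK e_gt0 tV.
have extV : extends_along_F D (Dfield V).
  apply: Dfield_extends => // i x; rewrite FV ?(valP x) // Dp.
  by case: (ord3_cases i) => [->|[->|->]].
exists (Dfield V); split=> // [|D'' dD'' ext'' f hf x].
  exact: (extension_commutes_sigma charK e_gt0 dV VC extV).
have D''C c y : D'' (fun _ => c) y = 0.
  have rc : regular (fun _ : Pt S => c) by exists c%:MP => z; rewrite mevalC.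
  by have := ext'' _ rc y; rewrite DC.
exact: (extension_unique charK e_gt0 dD'' dV D''C VC ext'' extV hf).
Qed.

End LiftOfDerivations.

(** * Homogeneity *)

Section WeightedGrading.
Variables (K : fieldType) (w : 'I_3 -> nat).
Implicit Types (p : {mpoly K[3]}) (v : 'I_3 -> K) (l : K).

Definition wscale l v : 'I_3 -> K := fun i => l ^+ w i * v i.

Lemma wscale1 v : wscale 1 v = v.
Proof. by apply: functional_extensionality => i; rewrite /wscale expr1n mul1r. Qed.

Lemma wscaleM l1 l2 v : wscale l1 (wscale l2 v) = wscale (l1 * l2) v.
Proof. by apply: functional_extensionality => i; rewrite /wscale mulrA exprMn. Qed.

Lemma polyfun_wscale l i : polyfun (fun v => wscale l v i).
Proof. by apply: polyfunM; [apply: polyfun_cst|apply: polyfun_coord]. Qed.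

Lemma meval_wscale l v p :
  p.@[wscale l v] = \sum_(m <- msupp p) p@_m * (l ^+ wdeg w m * \prod_(i < 3) v i ^+ m i).
Proof.
rewrite mevalE; apply: eq_bigr => m _; congr (_ * _).
rewrite /wdeg -prodrXr -big_split /=; apply: eq_bigr => i _.
by rewrite exprMn exprM.
Qed.

Lemma meval_wscale_homog (d : int) p l v :
  whomog_poly w d p -> p.@[wscale l v] = l ^ d * p.@[v].
Proof.
move=> hp; rewrite meval_wscale mevalE mulr_sumr big_seq [RHS]big_seq.
by apply: eq_bigr => m hm; rewrite -(hp m hm) mulrCA.
Qed.

Definition hcomp p (d : nat) : {mpoly K[3]} :=
  \sum_(m <- msupp p | wdeg w m == d) p@_m *: 'X_[m].

Lemma hcomp_homog p (d : nat) : whomog_poly w d (hcomp p d).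
Proof.
move=> m'; apply: contraTeq => hne.
rewrite mcoeff_msupp negbK /hcomp raddf_sum /=.
rewrite big1 // => m /eqP hm; rewrite mcoeffZ mcoeffX.
by case: eqP => [E|]; [move: hne; rewrite -E hm eqxx|rewrite mulr0].
Qed.

Definition wbound p : nat := (\max_(m <- msupp p) wdeg w m).+1.

Lemma meval_wscale_hcomp p l v N : (wbound p <= N)%N ->
  p.@[wscale l v] = \sum_(k < N) (hcomp p k).@[v] * l ^+ k.
Proof.
move=> hN; rewrite meval_wscale.
have -> : \sum_(k < N) (hcomp p k).@[v] * l ^+ k =
   \sum_(k < N) \sum_(m <- msupp p)
      (if wdeg w m == k then p@_m * \prod_(i < 3) v i ^+ m i * l ^+ k else 0).
  apply: eq_bigr => k _; rewrite /hcomp raddf_sum big_mkcond mulr_suml /=.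
  by apply: eq_bigr => m _; case: ifP => _; rewrite ?mul0r ?mevalZ ?mevalX.
rewrite exchange_big /= big_seq [RHS]big_seq; apply: eq_bigr => m hm.
have hlt : (wdeg w m < N)%N by apply: leq_trans hN; rewrite ltnS leq_bigmax_seq.
rewrite (bigD1 (Ordinal hlt)) //= eqxx [X in _ + X]big1 ?addr0; first by ring.
by move=> k hk; case: eqP => // E; case/eqP: hk; apply: val_inj; rewrite /= E.
Qed.

Lemma meval_sum_hcomp p v : p.@[v] = \sum_(k < wbound p) (hcomp p k).@[v].
Proof.
rewrite -[v]wscale1 (meval_wscale_hcomp 1 _ (leqnn _)) wscale1.
by apply: eq_bigr => k _; rewrite expr1n mulr1.
Qed.

End WeightedGrading.

Section HomogeneityFromScaling.
Variables (K : fieldType) (w : 'I_3 -> nat) (P : pred ('I_3 -> K)).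
Hypothesis charK : [pchar K] =i pred0.
Variable sc : K -> Pt P -> Pt P.
Hypothesis scE : forall l x, val (sc l x) = wscale w l (val x).

Lemma whomog_of_scaling (f : Pt P -> K) (d : int) :
  regular f -> (forall l x, l != 0 -> f (sc l x) = l ^ d * f x) -> whomog w d f.
Proof.
move=> [p Hp] hf; case: d hf => [n|k] hf.
- have hN : (wbound w p <= wbound w p + n.+1)%N by rewrite leq_addr.
  exists (hcomp w p n); split=> [|x]; first exact: hcomp_homog.
  pose Q := \poly_(k < wbound w p + n.+1) (hcomp w p k).@[val x].
  have /(congr1 (fun q : {poly K} => q`_n)) : Q - f x *: 'X^n = 0.
    apply: (poly_eq0_nonzero_roots charK) => l ln0.
    rewrite hornerD hornerN hornerZ hornerXn horner_poly -(meval_wscale_hcomp l _ hN).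
    by rewrite -scE -Hp hf // mulrC subrr.
  by rewrite coefB coef_poly addnS ltnS leq_addl coefZ coefXn eqxx mulr1 coef0 => /subr0_eq.
- exists 0; split=> [m|x]; first by rewrite msupp0.
  pose Q := \poly_(j < wbound w p) (hcomp w p j).@[val x].
  have /(congr1 (fun q : {poly K} => q`_0)) : 'X^(k.+1) * Q - (f x)%:P = 0.
    apply: (poly_eq0_nonzero_roots charK) => l ln0.
    rewrite hornerD hornerN hornerC hornerM hornerXn horner_poly.
    rewrite -(meval_wscale_hcomp l _ (leqnn _)) -scE -Hp hf // /exprz mulrA.
    by rewrite mulfV ?mul1r ?subrr // expf_neq0.
  by rewrite coefB coefXnM /= coefC /= coef0 sub0r meval0 => /eqP; rewrite oppr_eq0 => /eqP.
Qed.

End HomogeneityFromScaling.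

Section Scalings.
Variables (K : fieldType) (e : nat).
Implicit Types (l : K) (v : 'I_3 -> K).

Lemma regular_comp_wscale (P : pred ('I_3 -> K)) w (sc : Pt P -> Pt P) l :
  (forall y, val (sc y) = wscale w l (val y)) ->
  forall f, regular f -> regular (f \o sc).
Proof.
move=> scE f /regularE [p ->]; have [q Hq] := polyfun_comp (polyfun_wscale w l) (polyfun_meval p).
by exists q => y; rewrite /= /rfun scE Hq.
Qed.

Lemma onS_wscale l v : onS e v -> onS e (wscale (wS e) l v).
Proof.
rewrite /onS /wscale /wS /= => /eqP Sv; apply/eqP.
have -> : (l ^+ 2 * v i0) ^+ e = (l ^+ e) ^+ 2 * v i0 ^+ e by rewrite exprMn -!exprM mulnC.
rewrite [l ^+ e.+1]exprS; move: (l ^+ e) => a.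
have -> : (l * a * v i2) ^+ 2 + (a ^+ 2 * v i0 ^+ e - (a * v i1) ^+ 2) * (l ^+ 2 * v i0)
  = (l * a) ^+ 2 * (v i2 ^+ 2 + (v i0 ^+ e - v i1 ^+ 2) * v i0) by ring.
by rewrite Sv mulr0.
Qed.

Lemma onS'_wscale l v : onS' e v -> onS' e (wscale (wS' e) l v).
Proof.
rewrite /onS' /wscale /wS' /= => /eqP S'v; apply/eqP.
rewrite expr1 exprMn mulnC exprM; move: (l ^+ e) => a.
have -> : a ^+ 2 * v i0 ^+ (e * 2) - 4 * (a * v i1) * (a * v i2)
  = a ^+ 2 * (v i0 ^+ (e * 2) - 4 * v i1 * v i2) by ring.
by rewrite mulnC S'v mulr0.
Qed.

Definition scS l (y : Pt (@onS K e)) : Pt (@onS K e) :=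
  exist _ (wscale (wS e) l (val y)) (onS_wscale l (valP y)).
Definition scS' l (y : Pt (@onS' K e)) : Pt (@onS' K e) :=
  exist _ (wscale (wS' e) l (val y)) (onS'_wscale l (valP y)).

Lemma Fpt_scS' l x : Fpt (scS' l x) = scS l (Fpt x).
Proof.
apply: val_inj; rewrite /= [RHS]mkpt_eta /Fmap /wscale /wS /wS' !mkptE.
by congr mkpt; rewrite /= ?exprS ?expr0; ring.
Qed.

Lemma scS'K l x : l != 0 -> scS' l (scS' l^-1 x) = x.
Proof. by move=> ln0; apply: val_inj; rewrite /= wscaleM mulfV // wscale1. Qed.

Lemma scS'VK l x : l != 0 -> scS' l^-1 (scS' l x) = x.
Proof. by move=> ln0; apply: val_inj; rewrite /= wscaleM mulVf // wscale1. Qed.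

End Scalings.

Section HomogeneousLift.
Variables (K : fieldType) (e : nat).
Hypothesis charK : [pchar K] =i pred0.
Local Notation S := (@onS K e).
Local Notation S' := (@onS' K e).
Local Notation opS := ((Pt S -> K) -> Pt S -> K).
Local Notation opS' := ((Pt S' -> K) -> Pt S' -> K).
Local Notation Fpt := (@Fpt K e).

Lemma Kderivation_scale (D : opS) (r : int) : is_Kderivation D -> whomog_der (wS e) r D ->
  forall l, l != 0 -> forall f, regular f -> forall y, l ^ r * D (f \o scS l) y = D f (scS l y).
Proof.
move=> hD hr l ln0; have [[_ DD _] DK] := hD; have DC := derivation_cst hD.
have regsc := regular_comp_wscale (sc := scS l) (fun y => erefl).
pose Pl g := forall y, l ^ r * D (g \o scS l) y = D g (scS l y).
have homog_part (k : nat) g : whomog (wS e) k g -> Pl g.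
  move=> hg y; have [q [hq Eq]] := hg; have [s [hs Es]] := hr k g hg.
  have -> : g \o scS l = fun z => l ^+ k * g z.
    by apply: functional_extensionality => z; rewrite /= !Eq /= (meval_wscale_homog l _ hq).
  rewrite DK ?Es /= ?(meval_wscale_homog l _ hs) ?expfzDr // ?mulrA ?(mulrC (l ^ r)) //.
  by exists q.
have add_part g h : regular g -> regular h -> Pl g -> Pl h -> Pl (fun z => g z + h z).
  move=> rg rh Pg Ph y.
  have -> : (fun z => g z + h z) \o scS l = fun z => (g \o scS l) z + (h \o scS l) z by [].
  by rewrite !DD ?mulrDr ?Pg ?Ph //; apply: regsc.
move=> f /regularE [p ->].
have -> : rfun p = rfun (P := S) (\sum_(k < wbound (wS e) p) hcomp (wS e) p k).
  by apply: functional_extensionality => y; rewrite /rfun raddf_sum (meval_sum_hcomp (wS e)).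
elim: (wbound (wS e) p) => [|N IH].
  rewrite big_ord0 -[0]/(0%:MP) rfunC => y.
  by rewrite (DC 0) DC mulr0.
rewrite big_ord_recr rfunD; apply: add_part => //; try exact: regular_rfun.
by apply: (homog_part N); exists (hcomp (wS e) p N); split=> //; apply: hcomp_homog.
Qed.

Lemma derivation_conj_scS' (D' : opS') (r : int) l : l != 0 -> is_derivation D' ->
  is_derivation (fun g x => l ^ r * D' (g \o scS' l) (scS' l^-1 x)).
Proof.
move=> ln0 [DR DD DM].
have regsc (k : K) (f : Pt S' -> K) : regular f -> regular (f \o scS' k).
  exact: (regular_comp_wscale (sc := scS' k) (fun y => erefl)).
split=> [g hg|g h hg hh x|g h hg hh x].
- have [s Es] := DR _ (regsc l _ hg); have [t Et] := regsc l^-1 _ (regular_rfun s).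
  by exists ((l ^ r)%:MP * t) => x; rewrite mevalM mevalC -Et /= Es.
- by rewrite -mulrDr -(DD _ _ (regsc l _ hg) (regsc l _ hh)).
- by rewrite (DM _ _ (regsc l _ hg) (regsc l _ hh)) /comp !scS'K //; ring.
Qed.

Lemma lift_whomog (D : opS) (D' : opS') (r : int) :
  is_Kderivation D -> whomog_der (wS e) r D ->
  is_derivation D' -> (forall c x, D' (fun _ => c) x = 0) -> extends_along_F D D' ->
  (forall D'' : opS', is_derivation D'' -> extends_along_F D D'' ->
     forall f, regular f -> forall x, D'' f x = D' f x) ->
  whomog_der (wS' e) r D'.
Proof.
move=> hD hr dD' D'C ext uniq; have [_ _ D'M] := dD'.
have conj_eq l : l != 0 -> forall f, regular f -> forall x,
    l ^ r * D' (f \o scS' l) (scS' l^-1 x) = D' f x.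
  move=> ln0; apply: uniq; first exact: derivation_conj_scS'.
  move=> g hg x /=; have -> : (g \o Fpt) \o scS' l = (g \o scS l) \o Fpt.
    by apply: functional_extensionality => z; rewrite /= Fpt_scS'.
  rewrite ext; last exact: (regular_comp_wscale (sc := scS l) (fun y => erefl)).
  by rewrite (Kderivation_scale hD hr ln0 hg) -Fpt_scS' scS'K.
move=> m f [q [hq Eq]]; have hf : regular f by exists q.
have [DR _ _] := dD'.
apply: (whomog_of_scaling charK (sc := @scS' K e) (fun l x => erefl)) => [|l x ln0].
  exact: DR.
rewrite -(conj_eq l ln0 f hf) scS'VK //.
have -> : f \o scS' l = fun z => (fun _ => l ^+ m) z * f z.
  by apply: functional_extensionality => z; rewrite /= !Eq /= (meval_wscale_homog l _ hq).
rewrite D'M ?D'C ?mul0r ?addr0 ?expfzDr // ?mulrA ?(mulrC (l ^ r)) //.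
by exists (l ^+ m)%:MP => z; rewrite mevalC.
Qed.

End HomogeneousLift.

Theorem lemma11 (K : closedFieldType) (e1 : nat)
  (charK : [pchar K] =i pred0) (he1 : (2 < e1)%N) (odd_e1 : odd e1)
  (D : (Pt (@onS K e1) -> K) -> (Pt (@onS K e1) -> K))
  (hD : is_Kderivation D) :
  exists D' : (Pt (@onS' K e1) -> K) -> (Pt (@onS' K e1) -> K),
    [/\ is_derivation D', commutes_sigma D', extends_along_F D D',
        (forall D'' : (Pt (@onS' K e1) -> K) -> (Pt (@onS' K e1) -> K),
            is_derivation D'' -> commutes_sigma D'' -> extends_along_F D D'' ->
            forall f, regular f -> forall x, D'' f x = D' f x) &
        ((exists r : int, whomog_der (wS e1) r D) ->
           exists r' : int, whomog_der (wS' e1) r' D')].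
Proof.
have e_gt0 : (0 < e1)%N by apply: leq_trans he1.
have [D' [dD' D'C comm ext uniq]] := Kderivation_lift charK e_gt0 hD.
exists D'; split=> // [D'' dD'' _ ext''|[r hr]]; first exact: uniq.
by exists r; apply: (lift_whomog charK hD hr dD' D'C ext uniq).
Qed.
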